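(* Let $X$ be a connected vertex-transitive graph all of whose vertices have finite degree, with its path metric, and fix a vertex $x$. (i) If $\lim_{l\to\infty}\frac1l\log|B(x,l)|=0$, then $h_\infty(X)=0$. (ii) If $\limsup_{l\to\infty}\frac1l\log|B(x,l)|>0$, then $h_\infty(X)=\infty$.
   Context: A graph is vertex-transitive if for any two vertices $v,v'$ there is a graph automorphism mapping $v$ to $v'$. The path metric is the minimal number of edges of a path between two vertices; $B(x,l)$ is the closed ball. Coarse entropy $h_\infty(X)=\lim_{\delta\to\infty}\lim_{R\to\infty}\limsup_{n\to\infty}\frac1n\log s(n,R,\delta,x_0)$, where $s(n,R,\delta,x_0)$ is the supremum of cardinalities of $R$-separated sets of $\delta$-paths $(x_0,\dots,x_n)$ ($d(x_i,x_{i+1})\le\delta$) starting at $x_0$, paths compared by $\max_i d(x_i,y_i)$. *)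

From HB Require Import structures.
From mathcomp Require Import all_boot all_order all_algebra.
From mathcomp Require Import finmap all_classical all_reals all_analysis.
Set Implicit Arguments. Unset Strict Implicit. Unset Printing Implicit Defensive.
Import Order.TTheory GRing.Theory Num.Theory.
Import numFieldNormedType.Exports.
Local Open Scope classical_set_scope.
Local Open Scope ring_scope.

Section Graphs.
Variable V : choiceType.
Variable adj : V -> V -> Prop.

Inductive walk : nat -> V -> V -> Prop :=
| walk0 x : walk 0 x x
| walkS n x y z : adj x y -> walk n y z -> walk n.+1 x z.

Definition graph_connected : Prop := forall x y, exists n, walk n x y.

Definition locally_finite : Prop := forall v, finite_set [set w | adj v w].

Definition simple_graph : Prop :=
  (forall x y, adj x y -> adj y x) /\ (forall x, ~ adj x x).

Definition graph_automorphism (f : V -> V) : Prop :=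
  bijective f /\ (forall a b, adj a b <-> adj (f a) (f b)).

Definition vertex_transitive : Prop :=
  forall v v', exists f, graph_automorphism f /\ f v = v'.

(* path metric: minimal number of edges of a walk (0 if none exists) *)
Definition gdist (x y : V) : nat :=
  match pselect (exists n, `[< walk n x y >]) with
  | left H => ex_minn H
  | right _ => 0%N
  end.

Definition ball_g (x : V) (l : nat) : set V := [set y | (gdist x y <= l)%N].

Variable R : realType.

Definition ball_card (x : V) (l : nat) : R := (#|` fset_set (ball_g x l)|)%fset%:R.

Definition delta_path (n : nat) (delta : R) (x0 : V) (p : {ffun 'I_n.+1 -> V}) : Prop :=
  p ord0 = x0 /\
  forall i : nat, (i < n)%N -> (gdist (p (inord i)) (p (inord i.+1)))%:R <= delta.

Definition path_dist (n : nat) (p q : {ffun 'I_n.+1 -> V}) : R :=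
  \big[Num.max/0]_(i < n.+1) (gdist (p i) (q i))%:R.

Definition separated (n : nat) (Rs : R) (S : set {ffun 'I_n.+1 -> V}) : Prop :=
  forall p q, S p -> S q -> p <> q -> Rs < path_dist p q.

Definition s_count (n : nat) (Rs delta : R) (x0 : V) : \bar R :=
  ereal_sup [set ((#|` fset_set S|)%fset%:R)%:E |
     S in [set S : set {ffun 'I_n.+1 -> V} |
             [/\ finite_set S, S `<=` delta_path delta x0 & separated Rs S]]].

Definition elog (x : \bar R) : \bar R :=
  match x with
  | r%:E => if 0 < r then (ln r)%:E else -oo%E
  | +oo%E => +oo%E
  | -oo%E => -oo%E
  end.

Definition coarse_entropy (x0 : V) : \bar R :=
  lim ((fun delta : R =>
     lim ((fun Rs : R =>
        limn_esup (fun n : nat => ((n%:R)^-1)%:E * elog (s_count n Rs delta x0))%E)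
       @ +oo)) @ +oo).

End Graphs.

From Pilot Require Import Defs.
From HB Require Import structures.
From mathcomp Require Import all_boot all_order all_algebra.
From mathcomp Require Import finmap all_classical all_reals all_analysis.
From mathcomp Require Import zify ring lra.
Set Implicit Arguments. Unset Strict Implicit. Unset Printing Implicit Defensive.
Import Order.TTheory GRing.Theory Num.Theory.
Import numFieldNormedType.Exports.
Local Open Scope classical_set_scope.
Local Open Scope ring_scope.

(* Cut a delta-path into blocks of m steps and pull each block back
   to the base point by an automorphism: its displacement lies in B(x, mD) for
   D >= delta, and the displacements determine the block endpoints, hence the path
   up to distance 2(m-1)D.  So s(n, 2(m-1)D, delta) <= (|B(x, mD)| + 1)^(n/m) and
   the entropy is at most log |B(x, mD)| / m, which subexponential growth makes
   arbitrarily small.  If |B(x, l)| >= e^(cl), a maximal r-separated subset A of B(x, l)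
   has at least |B(x, l)| / |B(x, r)| points.  Concatenating D-coarse geodesics of
   T ~ l/D steps towards points of A, each translated to start where the previous
   one ended, yields |A|^k r-separated D-paths of length kT, so the entropy at
   scale D is at least log |A| / T >= cD/2.  Letting D grow gives infinity. *)

Lemma inord0 n : inord 0 = ord0 :> 'I_n.+1.
Proof. by apply: val_inj; rewrite /= inordK. Qed.

Lemma cardfs_le_card (T : finType) (A : {fset T}) : (#|` A| <= #|T|)%N.
Proof. by have := max_card (mem (enum_fset A)); rewrite (card_uniqP (fset_uniq A)). Qed.

Lemma card_fset_setT (T : finType) : #|` fset_set [set: T]| = #|T|.
Proof.
have -> : fset_set [set: T] = [fset t in enum T]%fset.
  apply/fsetP => t; rewrite in_fset_set; last exact: finite_finset.
  apply/idP/idP => _; last exact/mem_set.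
  by apply/imfsetP; exists t; rewrite ?mem_enum.
by rewrite card_fseq undup_id ?enum_uniq // -cardE.
Qed.

Lemma modn_eq_pred i T : (0 < T)%N -> (T %| i.+1)%N -> (i %% T = T.-1)%N.
Proof.
move=> T0 /dvdnP [[|q] iq]; first by rewrite mul0n in iq.
have -> : i = (q * T + T.-1)%N by move: iq; rewrite mulSn; lia.
by rewrite modnMDl modn_small // ltn_predL.
Qed.

Lemma insub_fset_inj (T : choiceType) (B : {fset T}) (a b : T) : a \in B -> b \in B ->
  (insub a : option B) = insub b -> a = b.
Proof.
move=> Ba Bb; case: insubP => [u _ ua|]; last by rewrite Ba.
by case: insubP => [u' _ u'b|]; [case=> uu'; rewrite -ua -u'b uu' | rewrite Bb].
Qed.

Section ExtendedReals.
Variable R : realType.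
Local Open Scope ereal_scope.

Lemma le_elog (a b : \bar R) : a <= b -> elog a <= elog b.
Proof.
case: a => [a| |]; case: b => [b| |] //=.
- rewrite lee_fin => ab; case: ifPn => a_gt0; last by rewrite leNye.
  have b_gt0 : (0 < b)%R by apply: lt_le_trans a_gt0 ab.
  by rewrite b_gt0 lee_fin ler_ln.
- by move=> _; rewrite leey.
all: by move=> _; rewrite ?leNye ?leey.
Qed.

Lemma limn_esup_le (u : (\bar R)^nat) b : (forall n, u n <= b) -> limn_esup u <= b.
Proof.
move=> ub; rewrite limn_esup_lim; apply: lime_le; first exact: is_cvg_esups.
by apply: nearW => n; apply: ge_ereal_sup => _ [k _ <-]; apply: ub.
Qed.

Lemma limn_esup_ge (u : (\bar R)^nat) b :
  (forall N, exists2 n, (N <= n)%N & b <= u n) -> b <= limn_esup u.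
Proof.
move=> lb; rewrite limn_esup_lim; apply: lime_ge; first exact: is_cvg_esups.
apply: nearW => N; have [n Nn bu] := lb N; apply: le_trans bu _.
by apply: ereal_sup_ubound; exists n.
Qed.

Lemma le_limn_esup (u v : (\bar R)^nat) : (forall n, u n <= v n) ->
  limn_esup u <= limn_esup v.
Proof.
move=> uv; rewrite !limn_esup_lim; apply: lee_lim; try exact: is_cvg_esups.
apply: nearW => n; apply: ge_ereal_sup => _ [k nk <-].
by apply: le_trans (uv k) _; apply: ereal_sup_ubound; exists k.
Qed.

End ExtendedReals.

Section CoarseEntropyOfGraphs.
Variables (V : choiceType) (adj : V -> V -> Prop).
Local Notation walk := (walk adj).
Local Notation gdist := (gdist adj).

Lemma walk_cat m n a b c : walk m a b -> walk n b c -> walk (m + n) a c.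
Proof. by elim=> [//|k u v w uv _ IH] /IH; apply: walkS. Qed.

Lemma walk_split m n a c : walk (m + n) a c -> exists b, walk m a b /\ walk n b c.
Proof.
elim: m a => [|m IH] a /=; first by exists a; split=> //; apply: walk0.
move=> W; inversion W as [|k u y w ay Wy]; subst.
by have [b [W1 W2]] := IH _ Wy; exists b; split=> //; apply: walkS ay W1.
Qed.

Lemma walk_hom (f : V -> V) : (forall a b, adj a b -> adj (f a) (f b)) ->
  forall n a b, walk n a b -> walk n (f a) (f b).
Proof.
move=> fadj n a b; elim=> [u|k u v w /fadj uv _ IH]; first exact: walk0.
exact: walkS uv IH.
Qed.

Lemma gdist_minimal a b n :
  walk n a b -> (gdist a b <= n)%N /\ walk (gdist a b) a b.
Proof.
move=> W; rewrite /Defs.gdist; case: pselect => [ex_walk|no_walk]; last first.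
  by exfalso; apply: no_walk; exists n; apply/asboolP.
by case: ex_minnP => m /asboolP Wm min_m; split=> //; apply/min_m/asboolP.
Qed.

Lemma gdist_le a b n : walk n a b -> (gdist a b <= n)%N.
Proof. by case/gdist_minimal. Qed.

Lemma gdistxx a : gdist a a = 0%N.
Proof. by apply/eqP; rewrite -leqn0; apply: gdist_le; apply: walk0. Qed.

Hypothesis conn : graph_connected adj.

Lemma gdist_walk a b : walk (gdist a b) a b.
Proof. by have [n W] := conn a b; case: (gdist_minimal W). Qed.

Lemma gdist_triangle a b c : (gdist a c <= gdist a b + gdist b c)%N.
Proof. by apply: gdist_le; apply: walk_cat; apply: gdist_walk. Qed.

Lemma gdist_automorphism f a b :
  graph_automorphism adj f -> gdist (f a) (f b) = gdist a b.
Proof.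
move=> [[g fK gK] fadj]; apply/eqP; rewrite eqn_leq; apply/andP; split.
  by apply: gdist_le; apply: walk_hom (gdist_walk a b) => u v /fadj.
have ghom u v : adj u v -> adj (g u) (g v) by move=> uv; apply/fadj; rewrite !gK.
by have := gdist_le (walk_hom ghom (gdist_walk (f a) (f b))); rewrite !fK.
Qed.

Hypothesis symm : forall a b, adj a b -> adj b a.

Lemma walk_rev n a b : walk n a b -> walk n b a.
Proof.
elim=> [u|k u v w uv _ IH]; first exact: walk0.
by rewrite -addn1; apply: walk_cat IH (walkS (symm uv) (walk0 _ _)).
Qed.

Lemma gdistC a b : gdist a b = gdist b a.
Proof. by apply/eqP; rewrite eqn_leq !gdist_le //; apply: walk_rev; apply: gdist_walk. Qed.

Hypothesis lf : locally_finite adj.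

Lemma walk_ends_finite k a : finite_set [set b | walk k a b].
Proof.
elim: k a => [|k IH] a.
  by apply: (sub_finite_set _ (finite_set1 a)) => b /= W; inversion W.
apply: (sub_finite_set _ (bigcup_finite (lf a) (fun y _ => IH y))).
by move=> b /= W; inversion W; subst; exists y.
Qed.

Lemma ball_g_finite a l : finite_set (ball_g adj a l).
Proof.
have F : finite_set (\bigcup_(k in [set k : nat | (k <= l)%N]) [set b | walk k a b]).
  apply: bigcup_finite => [|k _]; last exact: walk_ends_finite.
  by apply: (sub_finite_set _ (finite_II l.+1)) => k /=; rewrite ltnS.
by apply: sub_finite_set F => b /= ab; exists (gdist a b) => //; apply: gdist_walk.
Qed.

Hypothesis vt : vertex_transitive adj.
Variable x : V.

Definition transl (y : V) : V -> V := proj1_sig (cid (vt x y)).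

Lemma transl_spec y : graph_automorphism adj (transl y) /\ transl y x = y.
Proof. exact: proj2_sig (cid (vt x y)). Qed.

Lemma transl_invertible y : exists g, cancel (transl y) g /\ cancel g (transl y).
Proof. by case: (transl_spec y).1.1 => g; exists g. Qed.

Definition transl_inv (y : V) : V -> V := proj1_sig (cid (transl_invertible y)).

Lemma translK y : cancel (transl y) (transl_inv y).
Proof. exact: (proj2_sig (cid (transl_invertible y))).1. Qed.

Lemma transl_invK y : cancel (transl_inv y) (transl y).
Proof. exact: (proj2_sig (cid (transl_invertible y))).2. Qed.

Lemma transl_base y : transl y x = y.
Proof. exact: (transl_spec y).2. Qed.

Lemma gdist_transl y a b : gdist (transl y a) (transl y b) = gdist a b.
Proof. exact: gdist_automorphism (transl_spec y).1. Qed.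

Lemma gdist_transl_inv y a b : gdist (transl_inv y a) (transl_inv y b) = gdist a b.
Proof. by rewrite -(gdist_transl y) !transl_invK. Qed.

Definition ball_size (a : V) (l : nat) : nat := #|` fset_set (ball_g adj a l)|%fset.

Lemma ball_transl y l : ball_g adj y l = transl y @` ball_g adj x l.
Proof.
apply/seteqP; split => b /=.
  move=> yb; exists (transl_inv y b); last exact: transl_invK.
  by rewrite /ball_g /= -(gdist_transl y) transl_invK transl_base.
by case=> a xa <-; rewrite /ball_g /= -{1}(transl_base y) gdist_transl.
Qed.

Lemma ball_size_transl y l : ball_size y l = ball_size x l.
Proof.
rewrite /ball_size ball_transl fset_set_image; last exact: ball_g_finite.
by rewrite card_in_imfset //= => a b _ _; apply: (can_inj (translK y)).
Qed.

Lemma ball_size_gt0 a l : (0 < ball_size a l)%N.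
Proof.
rewrite /ball_size cardfs_gt0; apply/negP => /eqP B0.
have : a \in fset_set (ball_g adj a l).
  by rewrite in_fset_set ?inE /ball_g /= ?gdistxx //; apply: ball_g_finite.
by rewrite B0.
Qed.

Lemma card_le_cover (A : seq V) r (B : {fset V}) :
  (forall b, b \in B -> exists2 a, a \in A & (gdist a b <= r)%N) ->
  (#|` B| <= size A * ball_size x r)%N.
Proof.
elim: A B => [|a A IH] B cover.
  rewrite mul0n leqn0 cardfs_eq0; apply/eqP/fsetP => b; rewrite inE.
  by apply/negbTE/negP => /cover [a]; rewrite in_nil.
set B1 := [fset b in B | (gdist a b <= r)%N]%fset.
set B2 := [fset b in B | ~~ (gdist a b <= r)%N]%fset.
have -> : B = (B1 `|` B2)%fset.
  by apply/fsetP => b; rewrite !inE; case: (b \in B); case: (_ <= _)%N.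
apply: (@leq_trans (#|` B1| + #|` B2|)); first by rewrite -cardfsUI leq_addr.
rewrite /= mulSn leq_add //.
- rewrite -(ball_size_transl a r) /ball_size; apply: fsubset_leq_card.
  apply/fsubsetP => b; rewrite !inE => /andP[_ ab].
  by rewrite in_fset_set ?inE //; apply: ball_g_finite.
- apply: IH => b; rewrite !inE => /andP[Bb far_a]; have [a' Aa' a'b] := cover b Bb.
  move: Aa'; rewrite in_cons => /orP[/eqP E|]; first by rewrite -E a'b in far_a.
  by exists a'.
Qed.

Lemma exists_net (s : seq V) r : exists A : seq V,
  [/\ uniq A, {subset A <= s},
   (forall a b, a \in A -> b \in A -> a != b -> (r < gdist a b)%N) &
   (forall b, b \in s -> exists2 a, a \in A & (gdist a b <= r)%N)].
Proof.
elim: s => [|v s [A [uA sA sepA covA]]].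
  by exists [::]; split => // b; rewrite in_nil.
case: (boolP (has (fun a => gdist a v <= r)%N A)) => [/hasP [a Aa av]|far_v].
  exists A; split => //.
  - by move=> b /sA sb; rewrite in_cons sb orbT.
  - by move=> b; rewrite in_cons => /orP[/eqP ->|/covA //]; exists a.
have far a : a \in A -> (r < gdist a v)%N.
  by move=> Aa; rewrite ltnNge; apply/negP => av; move/hasP: far_v; apply; exists a.
exists (v :: A); split.
- by rewrite /= uA andbT; apply/negP => /far; rewrite gdistxx.
- by move=> b; rewrite !in_cons => /orP[->//|/sA ->]; rewrite orbT.
- move=> a b; rewrite !in_cons => /orP[/eqP->|Aa] /orP[/eqP->|Ab].
  + by rewrite eqxx.
  + by rewrite gdistC => _; apply: far.
  + by move=> _; apply: far.
  + exact: sepA.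
- move=> b; rewrite in_cons => /orP[/eqP->|/covA [a Aa ab]].
    by exists v; rewrite ?in_cons ?eqxx ?gdistxx.
  by exists a; rewrite ?in_cons ?Aa ?orbT.
Qed.

Variable R : realType.

Lemma delta_path_gdist_le (delta : R) D n (p : {ffun 'I_n.+1 -> V}) :
  delta_path adj delta x p -> delta <= D%:R -> forall a b, (a <= b)%N -> (b <= n)%N ->
  (gdist (p (inord a)) (p (inord b)) <= (b - a) * D)%N.
Proof.
move=> [_ steps] deltaD a; elim => [|b IH].
  by rewrite leqn0 => /eqP -> _; rewrite gdistxx.
rewrite leq_eqVlt => /orP[/eqP -> _|]; first by rewrite gdistxx.
rewrite ltnS => ab bn; apply: leq_trans (gdist_triangle _ (p (inord b)) _) _.
have step : (gdist (p (inord b)) (p (inord b.+1)) <= D)%N.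
  by rewrite -(ler_nat R); apply: le_trans (steps _ bn) deltaD.
apply: leq_trans (leq_add (IH ab (ltnW bn)) step) _.
by rewrite subSn // mulSn addnC.
Qed.

Section BlockCoding.
Variables (delta : R) (D m n : nat).
Hypotheses (m_gt0 : (0 < m)%N) (deltaD : delta <= D%:R).
Local Notation path := {ffun 'I_n.+1 -> V}.

Definition block_pos (p : path) (j : nat) : V := p (inord (j * m)).

Definition block_step (p : path) (j : nat) : V :=
  transl_inv (block_pos p j) (block_pos p j.+1).

Lemma block_step_in_ball p j : delta_path adj delta x p -> (j < n %/ m)%N ->
  ball_g adj x (m * D) (block_step p j).
Proof.
move=> dp jk; rewrite /ball_g /= -{1}(translK (block_pos p j) x) transl_base.
rewrite gdist_transl_inv; have : (j.+1 * m <= n)%N.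
  by apply: leq_trans (leq_mul jk (leqnn m)) _; rewrite leq_divM.
rewrite mulSn => jmn; have := delta_path_gdist_le dp deltaD (leq_addl m (j * m)) jmn.
by rewrite /block_pos mulSn addnK.
Qed.

Lemma block_pos_eq p q : delta_path adj delta x p -> delta_path adj delta x q ->
  (forall j, (j < n %/ m)%N -> block_step p j = block_step q j) ->
  forall j, (j <= n %/ m)%N -> block_pos p j = block_pos q j.
Proof.
move=> [p0 _] [q0 _] eq_step; elim=> [_|j IH jk].
  by rewrite /block_pos mul0n inord0 p0 q0.
have := eq_step j jk; rewrite /block_step (IH (ltnW jk)).
by move/(can_inj (transl_invK _)).
Qed.

Lemma gdist_block_pos p (i : 'I_n.+1) : delta_path adj delta x p ->
  (gdist (block_pos p (i %/ m)) (p i) <= m.-1 * D)%N.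
Proof.
move=> dp; have -> : p i = p (inord i) by rewrite inord_val.
have im : (i - i %/ m * m <= m.-1)%N.
  by rewrite {1}(divn_eq i m) addKn -ltnS prednK // ltn_pmod.
have := delta_path_gdist_le dp deltaD (leq_divM i m) (ltn_ord i : (i <= n)%N).
by move/leq_trans; apply; apply: leq_mul.
Qed.

Lemma path_dist_le_of_blocks p q : delta_path adj delta x p -> delta_path adj delta x q ->
  (forall j, (j <= n %/ m)%N -> block_pos p j = block_pos q j) ->
  path_dist adj R p q <= ((m.-1 * D).*2)%:R.
Proof.
move=> dp dq eq_pos; apply: bigmax_le => //= i _; rewrite ler_nat.
have jk : (i %/ m <= n %/ m)%N by apply: leq_div2r; rewrite -ltnS.
apply: leq_trans (gdist_triangle (p i) (block_pos p (i %/ m)) (q i)) _.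
rewrite -addnn leq_add //; first by rewrite gdistC gdist_block_pos.
by rewrite eq_pos ?gdist_block_pos.
Qed.

(* The [.+1] accounts for the [None] value of the [insub] coding of block steps. *)
Lemma separated_card_le (Rs : R) (S : set path) :
  ((m.-1 * D).*2)%:R <= Rs -> finite_set S -> S `<=` delta_path adj delta x ->
  Defs.separated adj Rs S ->
  (#|` fset_set S| <= (ball_size x (m * D)).+1 ^ (n %/ m))%N.
Proof.
move=> Rs_ge Sfin Sd Ssep; set B := fset_set (ball_g adj x (m * D)).
pose code p : {ffun 'I_(n %/ m) -> option B} :=
  [ffun j : 'I_(n %/ m) => insub (block_step p j)].
have inB p j : S p -> (j < n %/ m)%N -> block_step p j \in B.
  move=> Sp jk; rewrite in_fset_set ?inE; last exact: ball_g_finite.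
  exact: block_step_in_ball (Sd _ Sp) jk.
have code_inj : {in fset_set S &, injective code}.
  move=> p q; rewrite !in_fset_set // !inE => Sp Sq eq_code.
  apply/eqP/negP => /negP/eqP pq; have := Ssep _ _ Sp Sq pq; apply/negP; rewrite -leNgt.
  apply: le_trans Rs_ge; apply: path_dist_le_of_blocks (Sd _ Sp) (Sd _ Sq) _.
  apply: block_pos_eq (Sd _ Sp) (Sd _ Sq) _ => j jk.
  have := congr1 (fun f : {ffun 'I_(n %/ m) -> option B} => f (Ordinal jk)) eq_code.
  by rewrite !ffunE; apply: insub_fset_inj; apply: inB.
apply: (@leq_trans #|` [fset code p | p in fset_set S]%fset|).
  by rewrite card_in_imfset.
apply: leq_trans (cardfs_le_card _) _.
by rewrite card_ffun card_option card_ord -cardfE.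
Qed.

End BlockCoding.

Lemma walk_coarsen D T : forall L a b, walk L b a -> (L <= T * D)%N ->
  exists g : nat -> V, [/\ g 0%N = b, g T = a &
     forall t, (t < T)%N -> (gdist (g t) (g t.+1) <= D)%N].
Proof.
elim: T => [|T IH] L a b W LTD.
  move: LTD; rewrite mul0n leqn0 => /eqP L0; subst L; inversion W; subst.
  by exists (fun _ => a); split.
set L1 := minn L (T * D).
have L1L : (L = L1 + (L - L1))%N by rewrite subnKC // geq_minl.
rewrite L1L in W; have [c [W1 W2]] := walk_split W.
have [g [g0 gT steps]] := IH _ c b W1 (geq_minr _ _).
exists (fun t => if t == T.+1 then a else g t); split => //; first by rewrite eqxx.
move=> t; rewrite ltnS leq_eqVlt => /orP[/eqP->|tT].
  rewrite eqxx (ltn_eqF (ltnSn T)) gT; apply: leq_trans (gdist_le W2) _.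
  by rewrite /L1; move: LTD; rewrite mulSn; lia.
by rewrite (ltn_eqF (leqW tT)) (ltn_eqF (tT : (t.+1 < T.+1)%N)); apply: steps.
Qed.

Lemma coarse_geodesic_ex T D a : exists g : nat -> V, (gdist x a <= T * D)%N ->
  [/\ g 0%N = x, g T = a & forall t, (t < T)%N -> (gdist (g t) (g t.+1) <= D)%N].
Proof.
case: (boolP (gdist x a <= T * D)%N) => near; last by exists (fun _ => x).
by have [g gP] := walk_coarsen (gdist_walk x a) near; exists g.
Qed.

Definition coarse_geodesic T D a : nat -> V := proj1_sig (cid (coarse_geodesic_ex T D a)).

Lemma coarse_geodesicP T D a : (gdist x a <= T * D)%N ->
  [/\ coarse_geodesic T D a 0%N = x, coarse_geodesic T D a T = a &
   forall t, (t < T)%N ->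
     (gdist (coarse_geodesic T D a t) (coarse_geodesic T D a t.+1) <= D)%N].
Proof. exact: proj2_sig (cid (coarse_geodesic_ex T D a)). Qed.

Fixpoint block_start (target : nat -> V) (j : nat) : V :=
  if j is j'.+1 then transl (block_start target j') (target j') else x.

(* Block [j] follows [gam (target j)] translated to start at [block_start target j],
   so it ends at the start of block [j.+1]. *)
Definition concat_path (gam : V -> nat -> V) (target : nat -> V) (T i : nat) : V :=
  transl (block_start target (i %/ T)%N) (gam (target (i %/ T)%N) (i %% T)%N).

Section Concatenation.
Variables (gam : V -> nat -> V) (target : nat -> V) (T D : nat).
Hypotheses (T_gt0 : (0 < T)%N) (gam0 : forall j, gam (target j) 0%N = x)
  (gamT : forall j, gam (target j) T = target j)
  (gam_step : forall j t, (t < T)%N ->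
     (gdist (gam (target j) t) (gam (target j) t.+1) <= D)%N).

Lemma concat_path_block j : concat_path gam target T (j * T) = block_start target j.
Proof. by rewrite /concat_path mulnK // modnMl gam0 transl_base. Qed.

Lemma concat_path_step i :
  (gdist (concat_path gam target T i) (concat_path gam target T i.+1) <= D)%N.
Proof.
rewrite /concat_path divnS // modnS; case: (boolP (T %| i.+1)%N) => dvd /=.
  rewrite add1n gam0 transl_base /= -{2}(gamT (i %/ T)%N) gdist_transl modn_eq_pred //.
  by have := @gam_step (i %/ T)%N T.-1; rewrite prednK //; apply.
by rewrite add0n gdist_transl; apply: gam_step; apply: ltn_pmod.
Qed.

End Concatenation.

Section CodedPaths.
Variables (T D k : nat) (A : seq V).
Hypotheses (T_gt0 : (0 < T)%N) (A_near : forall a, a \in A -> (gdist x a <= T * D)%N).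
Local Notation code := {ffun 'I_k -> seq_sub A}.

Definition code_target (c : code) (j : nat) : V := oapp (fun o => ssval (c o)) x (insub j).

Lemma code_targetE c (o : 'I_k) : code_target c o = ssval (c o).
Proof. by rewrite /code_target valK. Qed.

Lemma code_target_near c j : (gdist x (code_target c j) <= T * D)%N.
Proof.
rewrite /code_target; case: insubP => [u _ _ | _] /=; last by rewrite gdistxx.
exact/A_near/ssvalP.
Qed.

Definition code_path (c : code) : {ffun 'I_(k * T).+1 -> V} :=
  [ffun i : 'I_(k * T).+1 => concat_path (coarse_geodesic T D) (code_target c) T i].

Lemma code_pathE c i : (i <= k * T)%N ->
  code_path c (inord i) = concat_path (coarse_geodesic T D) (code_target c) T i.
Proof. by move=> ikT; rewrite ffunE inordK. Qed.

Lemma code_path_block c j : (j <= k)%N ->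
  code_path c (inord (j * T)) = block_start (code_target c) j.
Proof.
move=> jk; rewrite code_pathE ?leq_mul2r ?jk ?orbT //.
by apply: concat_path_block => // j'; case: (coarse_geodesicP (code_target_near c j')).
Qed.

Lemma code_path_delta (delta : R) c : D%:R <= delta -> delta_path adj delta x (code_path c).
Proof.
move=> Ddelta; split; first by rewrite -inord0 -(mul0n T) code_path_block.
move=> i ikT; rewrite !code_pathE ?(ltnW ikT) //; apply: le_trans Ddelta.
by rewrite ler_nat; apply: concat_path_step => // j;
  case: (coarse_geodesicP (code_target_near c j)).
Qed.

Lemma code_target_in c j : (j < k)%N -> code_target c j \in A.
Proof. by move=> jk; have := code_targetE c (Ordinal jk) => /= ->; apply: ssvalP. Qed.

Lemma code_path_far r c c' :
  (forall a b, a \in A -> b \in A -> a != b -> (r < gdist a b)%N) -> c != c' ->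
  exists i, (r < gdist (code_path c i) (code_path c' i))%N.
Proof.
move=> A_sep neq_cc'.
have [j0 neq_j0] : exists j, c j != c' j.
  apply/existsP; apply: contraR neq_cc' => /existsPn eq_cc'.
  by apply/eqP/ffunP => j; apply/eqP/negbNE/eq_cc'.
have ex_j : exists j, (j < k)%N && (code_target c j != code_target c' j).
  by exists j0; rewrite ltn_ord !code_targetE; apply: contra_neq neq_j0; apply: val_inj.
case: (ex_minnP ex_j) => j /andP[jk neq_j] min_j.
have eq_start j' : (j' <= j)%N ->
    block_start (code_target c) j' = block_start (code_target c') j'.
  elim: j' => [//|j' IH] j'j /=; rewrite IH ?(ltnW j'j) //.
  case: (eqVneq (code_target c j') (code_target c' j')) => [-> //|neq'].
  have := min_j j'; rewrite neq' (ltn_trans j'j jk) => /(_ isT).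
  by rewrite leqNgt j'j.
exists (inord (j.+1 * T)); rewrite !code_path_block //= eq_start // gdist_transl.
by apply: A_sep => //; apply: code_target_in.
Qed.

Lemma separated_card_ge (delta Rs : R) r : D%:R <= delta -> Rs <= r%:R -> uniq A ->
  (forall a b, a \in A -> b \in A -> a != b -> (r < gdist a b)%N) ->
  exists S : set {ffun 'I_(k * T).+1 -> V},
    [/\ finite_set S, S `<=` delta_path adj delta x, Defs.separated adj Rs S &
        #|` fset_set S| = (size A ^ k)%N].
Proof.
move=> Ddelta Rsr uA A_sep.
have code_path_inj : injective code_path.
  move=> c c' eq_cc'; apply/eqP/negP => /negP /(code_path_far A_sep) [i].
  by rewrite eq_cc' gdistxx.
exists (code_path @` setT); split.
- exact: finite_image finite_finset.
- by move=> _ [c _ <-]; apply: code_path_delta.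
- move=> _ _ [c _ <-] [c' _ <-] neq.
  have neq_c : c != c' by apply/eqP => eq_c; apply: neq; rewrite eq_c.
  have [i far] := code_path_far A_sep neq_c.
  apply: le_lt_trans Rsr _; apply: lt_le_trans (le_bigmax _ _ i).
  by rewrite ltr_nat.
rewrite fset_set_image; last exact: finite_finset.
rewrite card_in_imfset /=; last by move=> c c' _ _; apply: code_path_inj.
by rewrite card_fset_setT card_ffun card_ord card_seq_sub.
Qed.
End CodedPaths.

Local Open Scope ereal_scope.

Lemma le_s_count n (delta delta' Rs Rs' : R) : (delta <= delta')%R -> (Rs' <= Rs)%R ->
  s_count adj n Rs delta x <= s_count adj n Rs' delta' x.
Proof.
move=> le_delta le_Rs; apply: ereal_sup_le => _ [S [Sf Sd Ss] <-].
exists S => //; split => //.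
- by move=> p /Sd [p0 steps]; split => // i ni; apply: le_trans (steps i ni) le_delta.
- by move=> p q Sp Sq pq; apply: le_lt_trans le_Rs (Ss p q Sp Sq pq).
Qed.

Lemma s_count_ge1 n (Rs delta : R) : (0 <= delta)%R -> 1 <= s_count adj n Rs delta x.
Proof.
move=> delta_ge0; apply: ereal_sup_ubound; exists [set [ffun _ => x]]; last first.
  by rewrite fset_set1 cardfs1.
split.
- exact: finite_set1.
- by move=> p ->; split=> [|i _]; rewrite !ffunE ?gdistxx.
- by move=> p q -> ->.
Qed.

Definition entropy_at (delta Rs : R) : \bar R :=
  limn_esup (fun n : nat => (n%:R^-1)%:E * elog (s_count adj n Rs delta x)).

Lemma le_entropy_at (delta delta' Rs Rs' : R) : (delta <= delta')%R -> (Rs' <= Rs)%R ->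
  entropy_at delta Rs <= entropy_at delta' Rs'.
Proof.
move=> le_delta le_Rs; apply: le_limn_esup => n.
by apply: lee_wpmul2l; [rewrite lee_fin invr_ge0 | apply/le_elog/le_s_count].
Qed.

Lemma entropy_at_ge0 (delta Rs : R) : (0 <= delta)%R -> 0 <= entropy_at delta Rs.
Proof.
move=> delta_ge0; apply: limn_esup_ge => N; exists N => //.
apply: mule_ge0; first by rewrite lee_fin invr_ge0.
by have := le_elog (s_count_ge1 N Rs delta_ge0); rewrite /= ltr01 ln1.
Qed.

(* The limits in [Rs] and in [delta] are monotone, hence an infimum and a supremum. *)
Lemma coarse_entropyE :
  coarse_entropy adj R x = ereal_sup (range (fun delta => ereal_inf (range (entropy_at delta)))).
Proof.
rewrite /coarse_entropy.
have -> : (fun delta : R => lim ((fun Rs : R =>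
     limn_esup (fun n : nat => (n%:R^-1)%:E * elog (s_count adj n Rs delta x))) @ +oo%R)) =
    (fun delta => ereal_inf (range (entropy_at delta))).
  apply/funext => delta; apply: cvg_lim => //; apply: nonincreasing_cvge.
  by move=> a b ab; apply: le_entropy_at.
apply: cvg_lim => //; apply: nondecreasing_cvge => a b ab.
apply: le_ereal_inf_tmp => _ [Rs _ <-]; apply: le_trans _ (le_entropy_at ab (lexx Rs)).
by apply: ereal_inf_lbound; exists Rs.
Qed.

Lemma entropy_at_le D m (delta : R) : (0 < m)%N -> (delta <= D%:R)%R ->
  entropy_at delta ((m.-1 * D).*2%:R) <= (ln (ball_size x (m * D)).+1%:R / m%:R)%:E.
Proof.
move=> m_gt0 deltaD; apply: limn_esup_le => n.
set L := ln (ball_size x (m * D)).+1%:R.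
have L_ge0 : (0 <= L)%R by apply: ln_ge0; rewrite ler1n.
set b := ((ball_size x (m * D)).+1 ^ (n %/ m))%N.
have le_s : s_count adj n ((m.-1 * D).*2%:R) delta x <= b%:R%:E.
  apply: ge_ereal_sup => _ [S [Sf Sd Ss] <-].
  by rewrite lee_fin ler_nat; apply: (separated_card_le m_gt0 deltaD).
have le_log : elog (s_count adj n ((m.-1 * D).*2%:R) delta x) <= (L *+ (n %/ m))%:E.
  apply: le_trans (le_elog le_s) _.
  by rewrite /= ltr0n expn_gt0 /= lee_fin /b natrX lnXn.
clearbody b; clear le_s; case: n le_log => [|n] le_log.
  by rewrite invr0 mul0e lee_fin divr_ge0.
apply: le_trans (lee_wpmul2l _ le_log) _; first by rewrite lee_fin invr_ge0.
rewrite -EFinM lee_fin -(mulr_natr L) mulrCA ler_wpM2l //.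
rewrite mulrC ler_pdivrMr ?ltr0n // ler_pdivlMl ?ltr0n // -natrM ler_nat.
by rewrite mulnC leq_divM.
Qed.

Lemma exists_small_ball_ratio D (e : R) : (0 < D)%N -> (0 < e)%R ->
  (fun l : nat => (ln (ball_card adj R x l) / l%:R)%R) @ \oo --> (0%R : R) ->
  exists2 m, (0 < m)%N & (ln (ball_size x (m * D)).+1%:R / m%:R <= e)%R.
Proof.
move=> D_gt0 e_gt0 ratio0.
have e2_gt0 : (0 < e / (2 * D%:R))%R by rewrite divr_gt0 // mulr_gt0 // ltr0n.
move/cvgrPdist_le: ratio0 => /(_ _ e2_gt0) [N _ ratio_small].
set m := maxn (maxn N 1) (Num.truncn (2 * ln 2 / e)).+1.
have m_gt0 : (0 < m)%N by rewrite /m; lia.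
exists m => //.
have : (N <= m * D)%N by apply: leq_trans (leq_pmulr _ D_gt0); rewrite /m; lia.
move/ratio_small; rewrite /= sub0r normrN /ball_card -/(ball_size x (m * D)).
set B := ball_size x (m * D).
have B_gt0 : (0 < B)%N by apply: ball_size_gt0.
have lnB_ge0 : (0 <= ln (B%:R : R))%R by apply: ln_ge0; rewrite ler1n.
move=> /(le_trans (ler_norm _)) ratio_mD.
have lnB_le : (ln B%:R <= e * m%:R / 2)%R.
  move: ratio_mD; rewrite ler_pdivrMr ?ltr0n ?muln_gt0 ?m_gt0 ?D_gt0 // natrM.
  move/le_trans; apply; rewrite le_eqVlt; apply/orP; left; apply/eqP; field.
  by rewrite pnatr_eq0 -lt0n.
have ln2_le : (2 * ln 2 <= e * m%:R)%R.
  rewrite [X in (_ <= X)%R]mulrC -ler_pdivrMr //.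
  by apply/ltW/(lt_le_trans (truncnS_gt _)); rewrite ler_nat leq_max leqnn orbT.
have lnBS_le : (ln B.+1%:R <= ln 2 + ln (B%:R : R))%R.
  rewrite -lnM ?posrE ?ltr0n // ler_ln ?posrE ?ltr0n ?mulr_gt0 ?ltr0n //.
  by rewrite -natrM ler_nat mul2n -addnn -addn1 leq_add2l.
rewrite ler_pdivrMr ?ltr0n //; lra.
Qed.

Lemma coarse_entropy_eq0 :
  (fun l : nat => (ln (ball_card adj R x l) / l%:R)%R) @ \oo --> (0%R : R) ->
  coarse_entropy adj R x = 0.
Proof.
move=> ratio0; rewrite coarse_entropyE; apply/eqP; rewrite eq_le; apply/andP; split.
- apply: ge_ereal_sup => _ [delta _ <-]; apply/lee_addgt0Pr => e e_gt0; rewrite add0e.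
  set D := (Num.truncn `|delta|).+1.
  have deltaD : (delta <= D%:R)%R.
    exact: le_trans (ler_norm delta) (ltW (truncnS_gt _)).
  have D_gt0 : (0 < D)%N by [].
  have [m m_gt0 small] := exists_small_ball_ratio D_gt0 e_gt0 ratio0.
  apply: ge_ereal_inf; exists (entropy_at delta ((m.-1 * D).*2%:R)).
    by exists (m.-1 * D).*2%:R.
  by apply: le_trans (entropy_at_le m_gt0 deltaD) _; rewrite lee_fin.
- apply: le_trans (ereal_sup_ubound _); last by exists 1%R.
  by apply: le_ereal_inf_tmp => _ [Rs _ <-]; apply: entropy_at_ge0.
Qed.

Lemma entropy_at_ge_net D T r (Rs : R) (A : seq V) :
  (0 < T)%N -> (Rs <= r%:R)%R -> uniq A -> (0 < size A)%N ->
  (forall a, a \in A -> (gdist x a <= T * D)%N) ->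
  (forall a b, a \in A -> b \in A -> a != b -> (r < gdist a b)%N) ->
  (ln (size A)%:R / T%:R)%:E <= entropy_at D%:R Rs.
Proof.
move=> T_gt0 Rsr uA A_gt0 A_near A_sep; apply: limn_esup_ge => n.
exists (n.+1 * T)%N; first by apply: leq_trans (leqnSn n) _; rewrite leq_pmulr.
have [S [Sf Sd Ss card_S]] :=
  separated_card_ge n.+1 T_gt0 A_near (lexx _) Rsr uA A_sep.
have le_s : ((size A ^ n.+1)%:R)%:E <= s_count adj (n.+1 * T) Rs D%:R x.
  by apply: ereal_sup_ubound; exists S; rewrite ?card_S.
apply: le_trans _ (lee_wpmul2l _ (le_elog le_s)); last by rewrite lee_fin invr_ge0.
rewrite /= ltr0n expn_gt0 A_gt0 /= -EFinM lee_fin natrX lnXn ?ltr0n //.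
suff -> : ((n.+1 * T)%:R^-1 * (ln (size A)%:R *+ n.+1) = ln (size A)%:R / T%:R :> R)%R.
  by [].
by rewrite natrM -mulr_natr; field; rewrite pnatr_eq0 -lt0n T_gt0 addrC natr1 pnatr_eq0.
Qed.

Lemma entropy_at_ge (c : R) D : (0 < c)%R -> (0 < D)%N ->
  (forall N, exists l, (N <= l)%N /\ (c * l%:R < ln (ball_size x l)%:R)%R) ->
  forall Rs, (c * D%:R / 2)%:E <= entropy_at D%:R Rs.
Proof.
move=> c_gt0 D_gt0 freq Rs.
set r := (Num.truncn `|Rs|).+1.
have Rsr : (Rs <= r%:R)%R by apply: le_trans (ler_norm Rs) (ltW (truncnS_gt _)).
pose br : R := ln (ball_size x r)%:R.
have br_ge0 : (0 <= br)%R by apply: ln_ge0; rewrite ler1n ball_size_gt0.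
have [l [Nl growth_l]] := freq (Num.truncn ((2 * br + c * D%:R) / c)).+1.
have l_large : (2 * br + c * D%:R < c * l%:R)%R.
  rewrite [X in (_ < X)%R]mulrC -ltr_pdivrMr //.
  by apply: lt_le_trans (truncnS_gt _) _; rewrite ler_nat.
set T := (l %/ D).+1.
have lT : (l <= T * D)%N by apply: ltnW; apply: ltn_ceil.
have TD : (T * D <= l + D)%N by rewrite /T mulSn addnC leq_add2r leq_divM.
have [A [uA sA sepA covA]] := exists_net (enum_fset (fset_set (ball_g adj x l))) r.
have A_near a : a \in A -> (gdist x a <= T * D)%N.
  move=> /sA; rewrite in_fset_set ?inE; last exact: ball_g_finite.
  by move/leq_trans; apply.
have cover : (ball_size x l <= size A * ball_size x r)%N.
  by apply: card_le_cover => b lb; apply: covA.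
have A_gt0 : (0 < size A)%N.
  by move: cover (ball_size_gt0 x l); case: (size A) => //; rewrite mul0n leqn0 => /eqP->.
apply: le_trans (entropy_at_ge_net (ltn0Sn _) Rsr uA A_gt0 A_near sepA).
have ln_cover : (ln (ball_size x l)%:R <= ln (size A)%:R + br)%R.
  rewrite -lnM ?posrE ?ltr0n ?ball_size_gt0 //.
  by rewrite ler_ln ?posrE ?ltr0n ?mulr_gt0 ?ltr0n ?ball_size_gt0 // -natrM ler_nat.
have cTD : (c * (T * D)%:R <= c * (l + D)%:R)%R.
  by apply: ler_wpM2l; [exact: ltW | rewrite ler_nat].
rewrite lee_fin ler_pdivlMr ?ltr0n //.
have -> : (c * D%:R / 2 * T%:R = c * (T * D)%:R / 2)%R by rewrite natrM; field.
move: cTD l_large growth_l ln_cover; rewrite natrD mulrDr.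
move: (c * (T * D)%:R)%R (c * l%:R)%R (c * D%:R)%R => cTD cl cD; lra.
Qed.

Lemma ball_growth_frequently :
  0 < limn_esup (fun l : nat => (ln (ball_card adj R x l) / l%:R)%R%:E) ->
  exists2 c : R, (0 < c)%R &
    forall N, exists l, (N <= l)%N /\ (c * l%:R < ln (ball_size x l)%:R)%R.
Proof.
set u := fun l : nat => _ => u_pos.
have [c c_gt0 c_lt] : exists2 c : R, (0 < c)%R & c%:E < limn_esup u.
  move: u_pos; case: (limn_esup u) => [y| |] y_gt0.
  - exists (y / 2)%R; first by rewrite divr_gt0 // -lte_fin.
    by rewrite lte_fin ltr_pdivrMr // ltr_pMr // ?ltr1n // -lte_fin.
  - by exists 1%R; rewrite ?ltr01 ?ltey.
  - by rewrite ltNge leNye in y_gt0.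
exists c => // N.
have : c%:E < esups u N.
  apply: lt_le_trans c_lt _; rewrite limn_esup_lim; apply: lime_le.
    exact: is_cvg_esups.
  by exists N => // n /= Nn; apply: nonincreasing_esups.
move/ereal_sup_gt => [_ [l Nl <-]]; rewrite /u lte_fin => c_lt_l.
exists l; split => //; case: l {Nl} c_lt_l => [|l].
  by rewrite invr0 mulr0 => /(lt_trans c_gt0); rewrite ltxx.
by rewrite -ltr_pdivlMr ?ltr0n.
Qed.

Lemma coarse_entropy_eqy :
  0 < limn_esup (fun l : nat => (ln (ball_card adj R x l) / l%:R)%R%:E) ->
  coarse_entropy adj R x = +oo.
Proof.
move=> /ball_growth_frequently [c c_gt0 freq]; rewrite coarse_entropyE.
set h := ereal_sup _.
have h_ge D : (0 < D)%N -> (c * D%:R / 2)%:E <= h.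
  move=> D_gt0; apply: le_trans (ereal_sup_ubound _); last by exists D%:R.
  by apply: le_ereal_inf_tmp => _ [Rs _ <-]; apply: entropy_at_ge.
move: h_ge; case: h => [y| |] h_ge //; last by have := h_ge 1%N isT; rewrite leNgt ltNye.
exfalso; set D := (Num.truncn (2 * `|y| / c)).+1.
have := h_ge D isT; rewrite lee_fin; apply/negP; rewrite -ltNge.
apply: le_lt_trans (ler_norm y) _.
have := truncnS_gt (2 * `|y| / c); rewrite -/D ltr_pdivrMr // => yD.
by rewrite ltr_pdivlMr //; lra.
Qed.

End CoarseEntropyOfGraphs.

Theorem mainTheorem17 (R : realType) (V : choiceType) (adj : V -> V -> Prop) (x : V) :
  simple_graph adj -> graph_connected adj -> locally_finite adj ->
  vertex_transitive adj ->
  ((fun l : nat => ln (@ball_card V adj R x l) / l%:R) @ \oo --> (0 : R) ->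
     @coarse_entropy V adj R x = 0%E) /\
  ((0 < limn_esup (fun l : nat => (ln (@ball_card V adj R x l) / l%:R)%:E))%E ->
     @coarse_entropy V adj R x = +oo%E).
Proof.
move=> [symm _] conn lf vt; split.
- exact: coarse_entropy_eq0.
- exact: coarse_entropy_eqy.
Qed.
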